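(* Let $G$ be a finite simple graph that contains no induced subgraph isomorphic to a banner or to $C_5$, and let $A$ be an odd antihole of $G$ (an induced subgraph). Suppose some two vertices of $A$ belong to a co-triangle of $G$. Then there is a homogeneous set $H$ of $G$ such that $H$ contains all vertices of $A$ and no co-triangle of $G[H]$ contains two vertices of $A$.
   Context: A hole is a chordless (induced) cycle with at least four vertices; it is odd if it has an odd number of vertices. An antihole is the complement of a hole; an odd antihole is the complement of an odd hole. $C_5$ is the chordless cycle on five vertices. A banner is the graph consisting of a hole on four vertices together with one additional vertex adjacent to exactly one vertex of that hole. A co-triangle is a set of three pairwise non-adjacent vertices. For $X \subseteq V(G)$, $G[X]$ is the subgraph induced by $X$. A set $H \subseteq V(G)$ is homogeneous if $2 \leq |H| < |V(G)|$ and every vertex of $V(G)\setminus H$ is either adjacent to all vertices of $H$ or to no vertex of $H$. *)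

From mathcomp Require Import all_boot.
Set Implicit Arguments. Unset Strict Implicit. Unset Printing Implicit Defensive.

Definition simple_graph (T : finType) (e : rel T) : Prop :=
  symmetric e /\ irreflexive e.

Definition has_induced (T : finType) (e : rel T) (F : finType) (f : rel F) : Prop :=
  exists h : F -> T, injective h /\ forall x y, e (h x) (h y) = f x y.

Definition cyc_adj (k : nat) (i j : 'I_k) : bool :=
  (i.+1 %% k == j) || (j.+1 %% k == i).

Definition C5_rel : rel 'I_5 := fun i j => cyc_adj i j.

(* banner: hole 0-1-2-3-0 plus vertex 4 adjacent only to 0 *)
Definition banner_rel : rel 'I_5 := fun i j =>
  let a := nat_of_ord i in let b := nat_of_ord j in
  [|| (a == 0) && (b == 1), (a == 1) && (b == 0),
      (a == 1) && (b == 2), (a == 2) && (b == 1),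
      (a == 2) && (b == 3), (a == 3) && (b == 2),
      (a == 3) && (b == 0), (a == 0) && (b == 3),
      (a == 4) && (b == 0) | (a == 0) && (b == 4)].

(* A is (the vertex set of) an odd antihole of G: G[A] is the complement of a
   chordless cycle of odd length k >= 4 (hence k >= 5). *)
Definition odd_antihole (T : finType) (e : rel T) (A : {set T}) : Prop :=
  exists k : nat, exists s : 'I_k -> T,
    [/\ odd k, 4 <= k, injective s, A = [set s i | i in 'I_k] &
        forall i j : 'I_k, i != j -> e (s i) (s j) = ~~ cyc_adj i j].

Definition cotriangle (T : finType) (e : rel T) (x y z : T) : bool :=
  [&& x != y, y != z, x != z, ~~ e x y, ~~ e y z & ~~ e x z].

Definition homogeneous (T : finType) (e : rel T) (H : {set T}) : Prop :=
  2 <= #|H| < #|T| /\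
  forall v, v \notin H -> (forall h, h \in H -> e v h) \/ (forall h, h \in H -> ~~ e v h).

(* Everything happens in the complement of G, where A is an odd hole c_0 ... c_(k-1);
   k = 5 is impossible because C5 is self-complementary.  Banner-freeness shows that a
   vertex outside A co-adjacent to two consecutive c_i is co-adjacent to all of A, so the
   third vertex of a co-triangle through two vertices of A lies in the set Z of vertices
   anticomplete to A in G.  Let H be the component containing A of the complement with Z
   deleted.  Using banner- and C5-freeness and the parity of k, every vertex of Z is
   co-adjacent to every vertex of H, while every other vertex outside H is adjacent to all
   of H by maximality; hence H is homogeneous, and since H misses Z it contains no
   co-triangle through two vertices of A. *)

From mathcomp Require Import all_boot zify.
From Stdlib Require Import Classical.
Set Implicit Arguments. Unset Strict Implicit. Unset Printing Implicit Defensive.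

Definition coadj (T : finType) (e : rel T) : rel T := fun u v => (u != v) && ~~ e u v.

Section Complement.
Variables (T : finType) (e : rel T).
Hypotheses (e_sym : symmetric e) (e_irr : irreflexive e).

Lemma coadj_sym : symmetric (coadj e).
Proof. by move=> u v; rewrite /coadj eq_sym e_sym. Qed.

Lemma adjE u v : e u v = (u != v) && ~~ coadj e u v.
Proof. by rewrite /coadj; case: eqP => [->|] //=; rewrite ?e_irr ?negbK. Qed.

Lemma adj_neq u v : e u v -> u != v.
Proof. by rewrite adjE => /andP[]. Qed.

(* In the complement a banner is the triangle p q r with the path r s t attached. *)
Lemma induced_banner p q r s t :
  coadj e p q -> coadj e q r -> coadj e p r -> coadj e r s -> coadj e s t ->
  e p s -> e q s -> e p t -> e q t -> e r t -> has_induced e banner_rel.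
Proof.
move=> /andP[npq epq] /andP[nqr eqr] /andP[npr epr] /andP[nrs ers] /andP[nst est]
  eps eqs ept eqt ert.
have [nps nqs npt nqt nrt] :=
  And5 (adj_neq eps) (adj_neq eqs) (adj_neq ept) (adj_neq eqt) (adj_neq ert).
exists (fun x : 'I_5 => match val x with 0 => t | 1 => p | 2 => s | 3 => q | _ => r end).
split.
  move=> [[|[|[|[|[|x]]]]] hx] [[|[|[|[|[|y]]]]] hy] //= E; apply: val_inj => //=;
  by exfalso; move: E; apply/eqP; rewrite // eq_sym.
move=> [[|[|[|[|[|x]]]]] hx] [[|[|[|[|[|y]]]]] hy] //=; rewrite /banner_rel /= ?e_irr //;
  first [by apply/negbTE | by apply/negbTE; rewrite e_sym | by rewrite // e_sym].
Qed.

(* C5 is self-complementary. *)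
Lemma induced_C5 v0 v1 v2 v3 v4 :
  coadj e v0 v1 -> coadj e v1 v2 -> coadj e v2 v3 -> coadj e v3 v4 -> coadj e v4 v0 ->
  e v0 v2 -> e v1 v3 -> e v2 v4 -> e v3 v0 -> e v4 v1 -> has_induced e C5_rel.
Proof.
move=> /andP[n01 e01] /andP[n12 e12] /andP[n23 e23] /andP[n34 e34] /andP[n40 e40]
  e02 e13 e24 e30 e41.
have [n02 n13 n24 n30 n41] :=
  And5 (adj_neq e02) (adj_neq e13) (adj_neq e24) (adj_neq e30) (adj_neq e41).
exists (fun x : 'I_5 => match val x with 0 => v0 | 1 => v2 | 2 => v4 | 3 => v1 | _ => v3 end).
split.
  move=> [[|[|[|[|[|x]]]]] hx] [[|[|[|[|[|y]]]]] hy] //= E; apply: val_inj => //=;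
  by exfalso; move: E; apply/eqP; rewrite // eq_sym.
move=> [[|[|[|[|[|x]]]]] hx] [[|[|[|[|[|y]]]]] hy] //=; rewrite /C5_rel /cyc_adj /= ?e_irr //;
  first [by apply/negbTE | by apply/negbTE; rewrite e_sym | by rewrite // e_sym].
Qed.
End Complement.

Arguments induced_banner {T e} e_sym e_irr p q r s t.
Arguments induced_C5 {T e} e_sym e_irr v0 v1 v2 v3 v4.

Definition induced_cycle (T : eqType) (g : rel T) (k : nat) (c : nat -> T) : Prop :=
  (forall a b, (c a == c b) = (a == b %[mod k])) /\
  (forall a b, g (c a) (c b) = (a.+1 == b %[mod k]) || (b.+1 == a %[mod k])).

Section InducedCycle.
Variables (T : eqType) (g : rel T) (k : nat) (c : nat -> T).
Hypothesis c_cycle : induced_cycle g k c.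

Lemma cycle_addk m : c (m + k) = c m.
Proof. by apply/eqP; rewrite c_cycle.1 modnDr. Qed.

Lemma cycle_mod m : c (m %% k) = c m.
Proof. by apply/eqP; rewrite c_cycle.1 modn_mod. Qed.

Lemma cycle_shift a : induced_cycle g k (fun m => c (a + m)).
Proof.
by split=> m n /=; [rewrite c_cycle.1 eqn_modDl | rewrite c_cycle.2 -!addnS !eqn_modDl].
Qed.

Lemma cycle_rebase a m : 0 < k -> exists d, c m = c (a + d).
Proof.
move=> k_gt0; exists (a * k + m - a); apply/eqP; rewrite c_cycle.1 addnBA.
  by rewrite addKn modnMDl.
by rewrite (leq_trans (leq_pmulr _ k_gt0)) ?leq_addr.
Qed.

Lemma cycle_eq_small i j : i < k -> j < k -> (c i == c j) = (i == j).
Proof. by move=> ik jk; rewrite c_cycle.1 !modn_small. Qed.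

Lemma cycle_rel_small i j : i.+1 < k -> j.+1 < k ->
  g (c i) (c j) = (i.+1 == j) || (j.+1 == i).
Proof. by move=> ik jk; rewrite c_cycle.2 !modn_small // ltnW. Qed.

Lemma cycle_triangle_free d : 3 < k -> g (c d) (c 0) -> g (c d) (c 1) -> False.
Proof.
move=> k_gt3; have [k_gt0 k_gt1 k_gt2] : [/\ 0 < k, 1 < k & 2 < k].
  by split; apply: ltn_trans _ k_gt3.
rewrite -(cycle_mod d); have : d %% k < k by rewrite ltn_pmod.
move: (d %% k) => {}d dk; rewrite !c_cycle.2 mod0n !(modn_small dk).
rewrite (modn_small k_gt1) (modn_small k_gt2).
case: (ltngtP d.+1 k) => [lt|//|eq]; rewrite ?(modn_small lt) ?eq ?modnn; lia.
Qed.
End InducedCycle.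

Section OddPeriod.
Variables (k : nat) (Q : pred nat).
Hypotheses (k_odd : odd k) (Q_period : forall m, Q (m + k) = Q m).

(* Steps of 2 from b reach b + (k + 1), which is b + 1 modulo the odd period k. *)
Lemma odd_period_step2 b : (forall m, Q m -> Q m.+2) -> Q b -> Q b.+1.
Proof.
move=> Q2 Qb; have Qeven j : Q (b + j.*2).
  by elim: j => [|j IH]; rewrite ?addn0 // doubleS !addnS; apply: Q2.
have half_k1 : k.+1./2.*2 = k.+1 by rewrite -[RHS]odd_double_half /= k_odd.
by have := Qeven k.+1./2; rewrite half_k1 addnS -addSn Q_period.
Qed.

Hypothesis Q_indep : forall m, Q m -> ~~ Q m.+1.

Lemma odd_period_gap b : Q b -> exists p, [&& Q p, ~~ Q p.+1 & ~~ Q p.+2].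
Proof.
move=> Qb; apply: NNPP => no_gap.
have Q2 m : Q m -> Q m.+2.
  by move=> Qm; apply: contraT => nQ2; case: no_gap; exists m; rewrite Qm Q_indep.
by have := Q_indep Qb; rewrite (odd_period_step2 Q2 Qb).
Qed.

Lemma odd_period_double_gap : exists a, ~~ Q a && ~~ Q a.+1.
Proof.
apply: NNPP => no_gap.
have Qnext a : ~~ Q a -> Q a.+1.
  by move=> nQ; apply: contraT => nQ1; case: no_gap; exists a; rewrite nQ.
have [b Qb] : exists b, Q b by case Q0 : (Q 0); [exists 0 | exists 1; rewrite Qnext ?Q0].
have Q2 m : Q m -> Q m.+2 by move/Q_indep/Qnext.
by have := Q_indep Qb; rewrite (odd_period_step2 Q2 Qb).
Qed.
End OddPeriod.

Definition anticomplete (T : finType) (e : rel T) (c : nat -> T) (w : T) : Prop :=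
  forall m, coadj e w (c m).

Lemma connect_invariant (T : finType) (g : rel T) (P : pred T) x y :
  (forall u v, P u -> g u v -> P v) -> connect g x y -> P x -> P y.
Proof.
move=> Pg /connectP[p + ->]; elim: p x => [|w p IH] x //= /andP[gxw pth] Px.
exact: IH pth (Pg _ _ Px gxw).
Qed.

Section AntiholeComponent.
Variables (T : finType) (e : rel T).
Hypotheses (e_sym : symmetric e) (e_irr : irreflexive e).
Hypothesis no_banner : ~ has_induced e banner_rel.
Variable k : nat.
Hypothesis k_gt6 : 6 < k.
Let lt_k n (n_lt6 : n < 6) : n < k := ltn_trans n_lt6 k_gt6.
Let k_gt0 : 0 < k := @lt_k 0 isT.

Local Notation cycle := (induced_cycle (coadj e) k).

Lemma coadj_cycle_small c i j : cycle c -> i < 6 -> j < 6 ->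
  coadj e (c i) (c j) = (i.+1 == j) || (j.+1 == i).
Proof. by move=> cc i6 j6; rewrite (cycle_rel_small cc) // (leq_ltn_trans _ k_gt6). Qed.

Lemma adj_cycle_small c i j : cycle c -> i < 6 -> j < 6 ->
  e (c i) (c j) = (i != j) && ~~ ((i.+1 == j) || (j.+1 == i)).
Proof.
by move=> cc i6 j6; rewrite (adjE e_irr) coadj_cycle_small // (cycle_eq_small cc) ?lt_k.
Qed.

(* Side conditions of [induced_banner] and [induced_C5]: adjacencies between the first
   six cycle vertices are computed, the others come from hypotheses over the cycle. *)
Ltac from_context :=
  first [ done | match goal with H : forall m : nat, _ |- _ => apply: H end ].

Ltac pattern_fact :=
  first [ by rewrite coadj_cycle_small | by rewrite adj_cycle_small
        | by from_context | by rewrite (coadj_sym e_sym); from_context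
        | by rewrite (adjE e_irr); apply/andP; split; from_context
        | by rewrite e_sym (adjE e_irr); apply/andP; split; from_context
        | by rewrite e_sym ].

Lemma coadj_cycle_step c w : cycle c ->
  coadj e w (c 0) -> coadj e w (c 1) -> coadj e w (c 2).
Proof.
move=> cc P0 P1; have w_out m : w != c m.
  apply/eqP=> wc; rewrite wc in P0 P1.
  exact: (cycle_triangle_free cc (@lt_k 3 isT) P0 P1).
apply: contraT => N2.
have [P3|N3] := boolP (coadj e w (c 3)); last first.
  by case: no_banner; apply: (induced_banner e_sym e_irr w (c 0) (c 1) (c 2) (c 3));
    pattern_fact.
have [P4|N4] := boolP (coadj e w (c 4)); last first.
  by case: no_banner; apply: (induced_banner e_sym e_irr (c 0) (c 1) w (c 3) (c 4));
    pattern_fact.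
have [P5|N5] := boolP (coadj e w (c 5)); last first.
  by case: no_banner; apply: (induced_banner e_sym e_irr (c 0) (c 1) w (c 4) (c 5));
    pattern_fact.
by case: no_banner; apply: (induced_banner e_sym e_irr (c 4) (c 5) w (c 1) (c 2));
  pattern_fact.
Qed.

Lemma anticomplete_of_consecutive c w a : cycle c ->
  coadj e w (c a) -> coadj e w (c a.+1) -> anticomplete e c w.
Proof.
move=> cc Pa Pa1.
have from_a j : coadj e w (c (a + j)) && coadj e w (c (a + j.+1)).
  elim: j => [|j /andP[Pj Pj1]]; first by rewrite addn0 addn1 Pa Pa1.
  have := coadj_cycle_step (cycle_shift cc (a + j)) (w := w).
  by rewrite /= addn0 addn1 addn2 -!addnS Pj1 => ->.
move=> m; have [d ->] := cycle_rebase cc a m k_gt0.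
by case/andP: (from_a d).
Qed.

Hypothesis no_C5 : ~ has_induced e C5_rel.
Hypothesis k_odd : odd k.

(* Parity gives a p with v co-adjacent to c_p but not to c_(p+1), c_(p+2); then c_(p+3)
   closes either a C5 or, together with z, a banner. *)
Lemma coadj_of_partial c z v b : cycle c -> anticomplete e c z ->
  coadj e v (c b) -> ~ anticomplete e c v -> coadj e z v.
Proof.
move=> cc z_anti vb v_part; apply: contraT => nzv.
have v_out m : v != c m by apply: contraNneq nzv => ->.
have ezv : e z v by rewrite (adjE e_irr) nzv andbT; apply: contraPneq v_part => <-.
pose Q m := coadj e v (c m).
have Q_period m : Q (m + k) = Q m by rewrite /Q (cycle_addk cc).
have Q_indep m : Q m -> ~~ Q m.+1.
  by move=> Qm; apply/negP => Qm1; apply: v_part; apply: anticomplete_of_consecutive cc Qm Qm1.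
have [p /and3P[vp nvp1 nvp2]] := odd_period_gap k_odd Q_period Q_indep vb.
have cc' := cycle_shift cc p; set c' := fun m => c (p + m) in cc'.
have z_c' m : coadj e z (c' m) by apply: z_anti.
have [P0 N1 N2] : [/\ coadj e v (c' 0), ~~ coadj e v (c' 1) & ~~ coadj e v (c' 2)].
  by rewrite /c' addn0 addn1 addn2.
have [P3|N3] := boolP (coadj e v (c' 3)).
  by case: no_C5; apply: (induced_C5 e_sym e_irr v (c' 0) (c' 1) (c' 2) (c' 3)); pattern_fact.
by case: no_banner; apply: (induced_banner e_sym e_irr (c' 2) (c' 3) z (c' 0) v); pattern_fact.
Qed.

(* Parity gives two consecutive c_a, c_(a+1) not co-adjacent to u; they form a banner with
   z, u and v. *)
Lemma coadj_of_anticomplete c z u v : cycle c -> anticomplete e c z -> coadj e z u ->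
  ~ anticomplete e c u -> coadj e u v -> (forall m, ~~ coadj e v (c m)) -> coadj e z v.
Proof.
move=> cc z_anti zu u_part uv v_none; apply: contraT => nzv.
have u_out m : u != c m by apply: contraTneq uv => ->; rewrite coadj_sym.
have v_out m : v != c m.
  by apply: contraTneq (v_none m.+1) => ->; rewrite negbK cc.2 eqxx.
have ezv : e z v.
  by rewrite (adjE e_irr) nzv andbT; apply: contraTneq (v_none 0) => <-; rewrite negbK.
pose Q m := coadj e u (c m).
have Q_period m : Q (m + k) = Q m by rewrite /Q (cycle_addk cc).
have Q_indep m : Q m -> ~~ Q m.+1.
  by move=> Qm; apply/negP => Qm1; apply: u_part; apply: anticomplete_of_consecutive cc Qm Qm1.
have [a /andP[nua nua1]] := odd_period_double_gap k_odd Q_period Q_indep.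
have cc' := cycle_shift cc a; set c' := fun m => c (a + m) in cc'.
have z_c' m : coadj e z (c' m) by apply: z_anti.
have [N0 N1] : ~~ coadj e u (c' 0) /\ ~~ coadj e u (c' 1) by rewrite /c' addn0 addn1.
case: no_banner; apply: (induced_banner e_sym e_irr (c' 0) (c' 1) z u v);
  pattern_fact.
Qed.

Variable c : nat -> T.
Hypothesis c_cycle : cycle c.
Local Notation A := [set c i | i : 'I_k].

Definition anticompl : {set T} := [set z | [forall i : 'I_k, coadj e z (c i)]].

Lemma anticomplP z : reflect (anticomplete e c z) (z \in anticompl).
Proof.
rewrite inE; apply: (iffP forallP) => [z_anti m | z_anti i]; last exact: z_anti.
rewrite -(cycle_mod c_cycle); exact: (z_anti (Ordinal (ltn_pmod m k_gt0))).
Qed.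

Lemma anticompl_of_edge z i j : coadj e (c i) (c j) ->
  coadj e z (c i) -> coadj e z (c j) -> z \in anticompl.
Proof.
rewrite c_cycle.2 => /orP[ij | ji] zi zj; apply/anticomplP.
  have cj : c j = c i.+1 by apply/eqP; rewrite c_cycle.1 eq_sym.
  by rewrite cj in zj; apply: anticomplete_of_consecutive c_cycle zi zj.
have ci : c i = c j.+1 by apply/eqP; rewrite c_cycle.1 eq_sym.
by rewrite ci in zi; apply: anticomplete_of_consecutive c_cycle zj zi.
Qed.

Lemma cotriangle_anticompl i j z : cotriangle e (c i) (c j) z -> z \in anticompl.
Proof.
case/and4P=> nij njz niz /and3P[eij ejz eiz]; apply: (anticompl_of_edge (i := i) (j := j)).
- by rewrite /coadj nij.
- by rewrite /coadj eq_sym niz e_sym.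
- by rewrite /coadj eq_sym njz e_sym.
Qed.

Definition component_rel : rel T :=
  [rel u v | [&& coadj e u v, u \notin anticompl & v \notin anticompl]].

Definition component : {set T} :=
  [set v | [exists i : 'I_k, connect component_rel (c i) v]].

Lemma component_coadj_anticompl v :
  v \in component -> (v \notin anticompl) && [forall z in anticompl, coadj e z v].
Proof.
pose P := [pred v | (v \notin anticompl) && [forall z in anticompl, coadj e z v]].
rewrite inE => /existsP[i ci]; apply: (connect_invariant (P := P) _ ci).
  move=> u w /andP[u_out u_anti].
  case/and3P=> uw _ w_out; rewrite /= w_out; apply/forall_inP => z /anticomplP z_anti.
  have zu : coadj e z u by move/forall_inP: u_anti; apply; apply/anticomplP.
  have w_part : ~ anticomplete e c w by move/anticomplP; apply/negP.
  have [/existsP[m wm] | /existsPn w_none] := boolP [exists m : 'I_k, coadj e w (c m)].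
    exact: coadj_of_partial c_cycle z_anti wm w_part.
  apply: coadj_of_anticomplete c_cycle z_anti zu _ uw _ => [/anticomplP|m].
    by apply/negP.
  by rewrite -(cycle_mod c_cycle); apply: (w_none (Ordinal (ltn_pmod m k_gt0))).
apply/andP; split; last by apply/forall_inP => z /anticomplP; apply.
by apply/negP => /anticomplP/(_ i); rewrite /coadj eqxx.
Qed.

Lemma cycle_in_component (i : 'I_k) : c i \in component.
Proof. by rewrite inE; apply/existsP; exists i. Qed.

Lemma component_homogeneous : anticompl != set0 -> homogeneous e component.
Proof.
case/set0Pn=> z0 z0_anti; split.
  apply/andP; split.
    have c_inj : injective (fun i : 'I_k => c i).
      by move=> i j /eqP; rewrite (cycle_eq_small c_cycle) // => /eqP/val_inj.
    have card_cycle : k <= #|component|.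
      rewrite -{1}(card_ord k) -(card_imset _ c_inj); apply/subset_leq_card/subsetP.
      by move=> _ /imsetP[i _ ->]; apply: cycle_in_component.
    by apply: leq_trans card_cycle; apply: leq_trans _ k_gt6.
  rewrite -cardsT; apply/proper_card/properP; split; first exact: subsetT.
  by exists z0 => //; apply: contraL z0_anti => /component_coadj_anticompl/andP[].
move=> v v_out; have [v_anti | v_part] := boolP (v \in anticompl).
  right=> h /component_coadj_anticompl/andP[_ /forall_inP/(_ v v_anti)].
  by case/andP.
left=> h h_comp; rewrite (adjE e_irr); apply/andP; split.
  by apply: contraNneq v_out => ->.
have /andP[h_out _] := component_coadj_anticompl h_comp.
apply: contraNN v_out => vh; move: h_comp; rewrite !inE.
case/existsP=> i ci; apply/existsP; exists i; apply: connect_trans ci (connect1 _).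
by rewrite /component_rel /= (coadj_sym e_sym) vh h_out.
Qed.

Lemma component_cotriangle_free x y z :
  x \in A -> y \in A -> z \in component -> ~~ cotriangle e x y z.
Proof.
move=> /imsetP[i _ ->] /imsetP[j _ ->] /component_coadj_anticompl/andP[z_out _].
by apply: contraNN z_out; apply: cotriangle_anticompl.
Qed.

Lemma cycle_homogeneous_component (i j : 'I_k) z : cotriangle e (c i) (c j) z ->
  exists H : {set T},
    [/\ homogeneous e H, A \subset H &
        forall x y z, x \in H -> y \in H -> z \in H -> cotriangle e x y z ->
          ~ (x \in A /\ y \in A)].
Proof.
move=> cij; exists component; split.
- by apply: component_homogeneous; apply/set0Pn; exists z; apply: cotriangle_anticompl cij.
- by apply/subsetP => _ /imsetP[l _ ->]; apply: cycle_in_component.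
- move=> x y z' _ _ z'_comp xyz' [xA yA].
  by have := component_cotriangle_free xA yA z'_comp; rewrite xyz'.
Qed.
End AntiholeComponent.

Lemma odd_antihole_cycle (T : finType) (e : rel T) (A : {set T}) :
  irreflexive e -> odd_antihole e A ->
  exists k (c : nat -> T),
    [/\ odd k, 3 < k, induced_cycle (coadj e) k c & A = [set c i | i : 'I_k]].
Proof.
move=> e_irr [k [s [k_odd k_gt3 s_inj -> s_adj]]].
have k_gt0 : 0 < k by apply: ltn_trans _ k_gt3.
pose r m := Ordinal (ltn_pmod m k_gt0).
have r_eq a b : (r a == r b) = (a == b %[mod k]) by [].
exists k, (fun m => s (r m)); split=> //; last first.
  by apply: eq_imset => i; congr s; apply: val_inj; rewrite /= modn_small.
split=> a b; first by rewrite (inj_eq s_inj).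
rewrite /coadj (inj_eq s_inj) r_eq; have [ab | nab] := eqVneq (a %% k) (b %% k).
  have succ_neq m : (m.+1 == m %[mod k]) = false.
    by rewrite -addn1 -{2}(addn0 m) eqn_modDl mod0n modn_small // (ltn_trans _ k_gt3).
  have b1 : b.+1 %% k = a.+1 %% k by rewrite -[b.+1]addn1 -modnDml -ab modnDml addn1.
  by rewrite b1 -ab succ_neq.
rewrite s_adj -?r_eq // negbK /cyc_adj /=.
by rewrite -[(a %% k).+1]addn1 -[(b %% k).+1]addn1 !modnDml !addn1.
Qed.

Lemma coC5_induced_C5 (T : finType) (e : rel T) c : symmetric e -> irreflexive e ->
  induced_cycle (coadj e) 5 c -> has_induced e C5_rel.
Proof.
move=> e_sym e_irr cc; apply: (induced_C5 e_sym e_irr (c 0) (c 1) (c 2) (c 3) (c 4)).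
all: by rewrite ?(adjE e_irr) ?cc.1 cc.2.
Qed.

Theorem lemma3 (T : finType) (e : rel T) (A : {set T}) :
  simple_graph e ->
  ~ has_induced e banner_rel ->
  ~ has_induced e C5_rel ->
  odd_antihole e A ->
  (exists x y z, [/\ x \in A, y \in A & cotriangle e x y z]) ->
  exists H : {set T},
    [/\ homogeneous e H, A \subset H &
        forall x y z, x \in H -> y \in H -> z \in H -> cotriangle e x y z ->
          ~ (x \in A /\ y \in A)].
Proof.
move=> [e_sym e_irr] no_banner no_C5 /(odd_antihole_cycle e_irr)[k [c [k_odd k_gt3 cc ->]]].
case=> _ [_ [z [/imsetP[i _ ->] /imsetP[j _ ->] cij]]].
have [k5 | k_gt6] : k = 5 \/ 6 < k.
  by case: k k_odd k_gt3 {i j cc cij} => [|[|[|[|[|[|[|k]]]]]]] //; [left | right].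
  by case: no_C5; rewrite k5 in cc; apply: coC5_induced_C5 cc.
exact: (cycle_homogeneous_component e_sym e_irr no_banner k_gt6 no_C5 k_odd cc cij).
Qed.
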